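(* Let $\mathcal{G}_D$ be a bipartite planar graph with an isoradial embedding, let $(f_v(z))_v$ be a special discrete analytic function, and let $\mu$ be a measure on the plane such that the integrals $\int f_b(z)\,d\mu(z)$ are defined (absolutely convergent). Then $F(b)=\int f_b(z)\,d\mu(z)$, $b$ black, is a discrete analytic function, i.e. $\sum_{b\in B}\bar\partial(w,b)F(b)=0$ for every white vertex $w$.
   Context: An isoradial embedding of a planar graph is an embedding in which every face is inscribed in a circle of radius $1$ whose center lies in the closure of the face; the dual is embedded at the circumcenters. For each edge $e$ the rhombus $R(e)$ of side $1$ has as vertices the endpoints of $e$ and of its dual edge; rhombus edges join a vertex of $\mathcal{G}_D$ to a dual vertex. Vertices of $\mathcal{G}_D$ are black ($B$) or white. $\bar\partial$ is the symmetric matrix, zero on non-adjacent pairs, with $\bar\partial(w,b)=\bar\partial(b,w)=i(x-y)$ when $R(wb)$ has vertices $w,x,b,y$ in counterclockwise order (as complex numbers). A special discrete analytic function is a family of functions $f_v(z)$, indexed by the rhombus vertices $v$, such that for each rhombus edge from $v$ to $v'$ with $\mathcal{G}_D$-endpoint $u$, letting $e^{i\alpha}$ be the unit vector along the edge oriented away from $u$ if $u$ is white and towards $u$ if $u$ is black: $f_{v'}=f_v/(z-e^{i\alpha})$ if traversal from $v$ to $v'$ is in the direction of $e^{i\alpha}$, and $f_{v'}=f_v\cdot(z-e^{i\alpha})$ otherwise. *)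

From HB Require Import structures.
From mathcomp Require Import all_boot all_order all_algebra.
From mathcomp Require Import complex.
From mathcomp Require Import all_classical all_reals all_analysis.
Set Implicit Arguments. Unset Strict Implicit. Unset Printing Implicit Defensive.
Import Order.TTheory GRing.Theory Num.Theory.
Local Open Scope ring_scope.

Section Geometry.
Variable R : realType.

Definition cre (z : R[i]) : R := complex.Re z.
Definition cim (z : R[i]) : R := complex.Im z.
Definition cnorm (z : R[i]) : R := ComplexField.Normc.normc z.
Definition expi (t : R) : R[i] := (cos t +i* sin t)%C.
Definition cdir (z : R[i]) : R[i] := z / ((cnorm z)%:C)%C.
(* cross product Im(conj a * b): > 0 iff b is counterclockwise from a *)
Definition cross (a b : R[i]) : R := cre a * cim b - cim a * cre b.
(* twice the signed area of the quadrilateral p0 p1 p2 p3 (shoelace);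
   it is > 0 iff p0,p1,p2,p3 are in counterclockwise order *)
Definition area4 (p0 p1 p2 p3 : R[i]) : R :=
  cross (p1 - p0) (p2 - p0) + cross (p2 - p0) (p3 - p0).
End Geometry.

(* An embedded planar graph G_D given by a rotation system.                 *)
(*   D        : faces of G_D = vertices of the dual graph                   *)
(*   dpos f   : position of the dual vertex f (circumcenter of the face f)  *)
(*   nbr v j  : (j < deg v) the neighbours of v, in counterclockwise order   *)
(*   face v j : (j < deg v) the face between nbr v j and nbr v (j+1 mod deg) *)
(* Indices are always read modulo deg v.                                    *)
Section Graph.
Variables (R : realType) (V D : eqType).
Variables (pos : V -> R[i]) (dpos : D -> R[i]).
Variables (deg : V -> nat) (nbr : V -> nat -> V) (face : V -> nat -> D).

Definition nbseq (v : V) : seq V := [seq nbr v j | j <- iota 0 (deg v)].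

Definition cnext (v : V) (j : nat) : nat := j.+1 %% deg v.
Definition cprev (v : V) (j : nat) : nat := (j + deg v).-1 %% deg v.

(* the interleaved cyclic sequence of rhombus-neighbour directions around v:
   edge to nbr v 0, face v 0, edge to nbr v 1, face v 1, ... *)
Definition rdir (v : V) (m : nat) : R[i] :=
  if odd m then dpos (face v m./2) - pos v else pos (nbr v m./2) - pos v.

(* Isoradial embedding of G_D (with its dual at the circumcenters):
   - simple, locally finite graph given by a rotation system whose faces are
     consistently labelled (combinatorial map);
   - straight-line embedding in which, around every vertex v, the edges and
     the centers of the faces are met in counterclockwise order, going
     around v exactly once; each face center lies (weakly) on the inner side
     of the edges of its face, i.e. in the closure of the face (the turning
     angles are in [0, pi/2], the base angles of the isosceles triangles
     (v, neighbour, center));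
   - every face is inscribed in the circle of radius 1 centred at its dual
     vertex. *)
Definition isoradial_embedding : Prop :=
  (forall v, (0 < deg v)%N) /\
  (forall v, uniq (nbseq v) /\ v \notin nbseq v) /\
  (forall u v, (u \in nbseq v) = (v \in nbseq u)) /\
  (* combinatorial consistency of faces: the face between nbr v j and
     nbr v (j+1) is the face following v around nbr v (j+1), and the face
     preceding v around nbr v j *)
  (forall v j, (j < deg v)%N ->
     let u := nbr v (cnext v j) in face u (index v (nbseq u)) = face v j) /\
  (forall v j, (j < deg v)%N ->
     let u := nbr v j in face u (cprev u (index v (nbseq u))) = face v j) /\
  (forall v j, (j < deg v)%N -> pos (nbr v j) != pos v) /\
  (forall v, exists t : nat -> R,
     (forall m, (m < (deg v).*2)%N -> 0 <= t m <= pi / 2) /\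
     \sum_(m < (deg v).*2) t m = 2 * pi /\
     (forall m, (m < (deg v).*2)%N ->
        cdir (rdir v (m.+1 %% (deg v).*2)) = cdir (rdir v m) * expi (t m))) /\
  (forall v j, (j < deg v)%N -> cnorm (dpos (face v j) - pos v) = 1).

Definition bipartite_colouring (black : V -> bool) : Prop :=
  forall v j, (j < deg v)%N -> black (nbr v j) != black v.

(* For the edge joining u to its j-th neighbour b, the
   dual edge joins face u (j-1) and face u j; dbar = i(x - y) where the
   rhombus R(ub) has vertices u, x, b, y in counterclockwise order. *)
Definition dbar_edge (u : V) (j : nat) : R[i] :=
  let b := pos (nbr u j) in
  let x := dpos (face u (cprev u j)) in
  let y := dpos (face u j) in
  if 0 <= area4 (pos u) x b y then 'i%C * (x - y) else 'i%C * (y - x).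

Definition dbar (u v : V) : R[i] :=
  let j := index v (nbseq u) in
  if (j < deg u)%N then dbar_edge u j else 0.

(* Special discrete analytic function f_v(z), v ranging over the rhombus
   vertices V (+) D.  Rhombus edges join a vertex u of G_D to the dual
   vertices face u j.  With e = e^{i alpha} the unit vector along the edge
   (away from u if u is white, towards u if u is black), the rule reads
   f_{v'} = f_v / (z - e) when going from v to v' in the direction of e, and
   f_{v'} = f_v (z - e) otherwise; both say f_src = (z - e) f_dst where src->dst
   is the direction of e.  We use this division-free form, for all z. *)
Definition special_discrete_analytic (black : V -> bool)
    (fV : V -> R[i] -> R[i]) (fD : D -> R[i] -> R[i]) : Prop :=
  forall u j, (j < deg u)%N ->
    let y := face u j in
    if black u then
      forall z, fD y z = (z - (pos u - dpos y)) * fV u z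
    else
      forall z, fV u z = (z - (dpos y - pos u)) * fD y z.

End Graph.

Section Integral.
Variable R : realType.

Definition of_pair (p : R * R) : R[i] := (p.1 +i* p.2)%C.

Definition cintegrable (mu : {measure set (R * R)%type -> \bar R})
    (f : R[i] -> R[i]) : Prop :=
  mu.-integrable setT (fun p => (cre (f (of_pair p)))%:E) /\
  mu.-integrable setT (fun p => (cim (f (of_pair p)))%:E).

Definition cintegral (mu : {measure set (R * R)%type -> \bar R})
    (f : R[i] -> R[i]) : R[i] :=
  (Rintegral mu setT (fun p => cre (f (of_pair p))) +i*
   Rintegral mu setT (fun p => cim (f (of_pair p))))%C.
End Integral.

From Pilot Require Import Defs.
From HB Require Import structures.
From mathcomp Require Import all_boot all_order all_algebra.
From mathcomp Require Import complex.
From mathcomp Require Import all_classical all_reals all_analysis.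
From mathcomp Require Import ring.
Set Implicit Arguments.
Unset Strict Implicit.
Unset Printing Implicit Defensive.
Import Order.TTheory GRing.Theory Num.Theory.
Local Open Scope ring_scope.

(* For each fixed z the family b |-> f_b(z) is itself discrete analytic.  Let
   b be a (black) neighbour of the white vertex w and x, y the faces before and
   after the edge wb around w.  The rule of f along the rhombus edges x-b and
   y-b gives f_x(z) - f_y(z) = (x - y) f_b(z), i.e. dbar(w,b) f_b(z) =
   i (f_x(z) - f_y(z)); summed over the neighbours of w this telescopes to 0.
   The turning angles of an isoradial embedding lie in [0, pi/2], so w, x, b, y
   is counterclockwise and dbar(w,b) is indeed i (x - y).  Integration in z is
   linear, so F inherits the property. *)

Section ComplexParts.
Variable R : realType.
Implicit Types x y : R[i].

Lemma creD x y : cre (x + y) = cre x + cre y. Proof. by case: x; case: y. Qed.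
Lemma cimD x y : cim (x + y) = cim x + cim y. Proof. by case: x; case: y. Qed.
Lemma creM x y : cre (x * y) = cre x * cre y - cim x * cim y.
Proof. by case: x; case: y. Qed.
Lemma cimM x y : cim (x * y) = cre x * cim y + cim x * cre y.
Proof. by case: x; case: y. Qed.

End ComplexParts.

Section ComplexIntegral.
Variables (R : realType) (mu : {measure set (R * R)%type -> \bar R}).
Implicit Types (f g : R[i] -> R[i]) (u v : R * R -> R).

Local Notation rintegrable u := (mu.-integrable setT (EFin \o u)).

Lemma integrableZ_EFin (a : R) u : rintegrable u -> rintegrable (fun p => a * u p).
Proof.
move=> iu; have iZ := integrableZl measurableT a iu.
by apply: (eq_integrable measurableT _ _ _ iZ) => p _ /=; rewrite EFinM.
Qed.

Lemma integrable_lincomb (a b : R) u v : rintegrable u -> rintegrable v ->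
  rintegrable (fun p => a * u p + b * v p).
Proof.
move=> iu iv.
have iD := integrableD measurableT (integrableZ_EFin a iu) (integrableZ_EFin b iv).
by apply: (eq_integrable measurableT _ _ _ iD) => p _ /=; rewrite EFinD.
Qed.

Lemma Rintegral_lincomb (a b : R) u v : rintegrable u -> rintegrable v ->
  \int[mu]_p (a * u p + b * v p) = a * \int[mu]_p u p + b * \int[mu]_p v p.
Proof. by move=> iu iv; rewrite RintegralD ?RintegralZl ?integrableZ_EFin. Qed.

Lemma cintegrable0 : cintegrable mu (fun=> 0).
Proof. by split; exact: integrable0. Qed.

Lemma cintegral0 : cintegral mu (fun=> 0) = 0.
Proof. by rewrite /cintegral /Rintegral integral0. Qed.

Lemma cintegrableD f g : cintegrable mu f -> cintegrable mu g ->
  cintegrable mu (fun z => f z + g z).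
Proof.
move=> [fr fi] [gr gi]; split.
- apply: (eq_integrable measurableT _ _ _ (integrable_lincomb 1 1 fr gr)) => p _ /=.
  by rewrite creD !mul1r.
- apply: (eq_integrable measurableT _ _ _ (integrable_lincomb 1 1 fi gi)) => p _ /=.
  by rewrite cimD !mul1r.
Qed.

Lemma cintegralD f g : cintegrable mu f -> cintegrable mu g ->
  cintegral mu (fun z => f z + g z) = cintegral mu f + cintegral mu g.
Proof.
move=> [fr fi] [gr gi]; rewrite /cintegral /=; congr (_ +i* _)%C.
- by rewrite (eq_Rintegral mu (fun p _ => creD _ _)) RintegralD.
- by rewrite (eq_Rintegral mu (fun p _ => cimD _ _)) RintegralD.
Qed.

Lemma cintegrableZ c f : cintegrable mu f -> cintegrable mu (fun z => c * f z).
Proof.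
move=> [fr fi]; split.
- have iRe := integrable_lincomb (cre c) (- cim c) fr fi.
  by apply: (eq_integrable measurableT _ _ _ iRe) => p _ /=; rewrite creM mulNr.
- have iIm := integrable_lincomb (cim c) (cre c) fr fi.
  by apply: (eq_integrable measurableT _ _ _ iIm) => p _ /=; rewrite cimM addrC.
Qed.

Lemma cintegralZ c f : cintegrable mu f ->
  cintegral mu (fun z => c * f z) = c * cintegral mu f.
Proof.
move=> [fr fi].
have re z : cre (c * f z) = cre c * cre (f z) + (- cim c) * cim (f z).
  by rewrite creM mulNr.
have im z : cim (c * f z) = cim c * cre (f z) + cre c * cim (f z).
  by rewrite cimM addrC.
rewrite /cintegral (eq_Rintegral mu (fun p _ => re _)).
rewrite (eq_Rintegral mu (fun p _ => im _)).
rewrite !Rintegral_lincomb //; case: c {re im} => a b /=.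
by congr (_ +i* _)%C; rewrite /cre /cim /=; ring.
Qed.

Lemma cintegrable_sum (I : eqType) (s : seq I) (f : I -> R[i] -> R[i]) :
  (forall i, i \in s -> cintegrable mu (f i)) ->
  cintegrable mu (fun z => \sum_(i <- s) f i z).
Proof.
elim: s => [|i s IHs] fs.
  by under eq_fun do rewrite big_nil; exact: cintegrable0.
under eq_fun do rewrite big_cons.
apply: cintegrableD; first by apply: fs; rewrite mem_head.
by apply: IHs => j js; apply: fs; rewrite in_cons js orbT.
Qed.

Lemma cintegral_sum (I : eqType) (s : seq I) (f : I -> R[i] -> R[i]) :
  (forall i, i \in s -> cintegrable mu (f i)) ->
  cintegral mu (fun z => \sum_(i <- s) f i z) = \sum_(i <- s) cintegral mu (f i).
Proof.
elim: s => [|i s IHs] fs.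
  by under eq_fun do rewrite big_nil; rewrite big_nil cintegral0.
have fs' j : j \in s -> cintegrable mu (f j).
  by move=> js; apply: fs; rewrite in_cons js orbT.
under eq_fun do rewrite big_cons.
rewrite cintegralD ?big_cons ?IHs //; first by apply: fs; rewrite mem_head.
exact: cintegrable_sum.
Qed.

End ComplexIntegral.

Section PlaneGeometry.
Variable R : realType.
Implicit Types p q u e : R[i].

Lemma cnorm0 : cnorm (0 : R[i]) = 0.
Proof. by rewrite /cnorm /= expr0n /= addr0 sqrtr0. Qed.

Lemma cnorm_gt0 p : p != 0 -> 0 < cnorm p.
Proof.
case: p => a b p0; rewrite /cnorm /= sqrtr_gt0 lt_def addr_ge0 ?sqr_ge0 // andbT.
apply: contra p0; rewrite paddr_eq0 ?sqr_ge0 // !sqrf_eq0 => /andP[/eqP -> /eqP ->].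
by [].
Qed.

Lemma cnormMcdir p : p != 0 -> (cnorm p)%:C%C * cdir p = p.
Proof.
move=> p0; rewrite /cdir mulrC divfK //; apply/eqP => /(congr1 (@complex.Re R)) /=.
by move/eqP; rewrite gt_eqF // cnorm_gt0.
Qed.

Lemma cross_rot (r s : R) u e :
  cross (r%:C%C * u) (s%:C%C * (u * e)) = r * s * cim e * (cre u ^+ 2 + cim u ^+ 2).
Proof. by case: u => a b; case: e => c d; rewrite /cross /cre /cim /=; ring. Qed.

Lemma cross_ge0_rot p q t : p != 0 -> q != 0 -> 0 <= t <= pi ->
  cdir q = cdir p * expi t -> 0 <= cross p q.
Proof.
move=> p0 q0 t0pi dirq; rewrite -(cnormMcdir p0) -(cnormMcdir q0) dirq cross_rot.
by rewrite !mulr_ge0 ?addr_ge0 ?sqr_ge0 ?(ltW (cnorm_gt0 _)) ?sin_ge0_pi.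
Qed.

End PlaneGeometry.

Section IsoradialEmbedding.
Variables (R : realType) (V D : eqType) (pos : V -> R[i]) (dpos : D -> R[i]).
Variables (deg : V -> nat) (nbr : V -> nat -> V) (face : V -> nat -> D).
Hypothesis iso : isoradial_embedding pos dpos deg nbr face.

Local Notation nbseq := (nbseq deg nbr).
Local Notation cprev := (cprev deg).
Local Notation rdir := (rdir pos dpos nbr face).
Local Notation dbar_edge := (dbar_edge pos dpos deg nbr face).
Local Notation dbar := (dbar pos dpos deg nbr face).

Let nbseq_uniq v : uniq (nbseq v) := (iso.2.1 v).1.
Let nbseq_sym u v : (u \in nbseq v) = (v \in nbseq u) := iso.2.2.1 u v.
Let face_next v j : (j < deg v)%N ->
  face (nbr v (cnext deg v j)) (index v (nbseq (nbr v (cnext deg v j)))) = face v j :=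
  iso.2.2.2.1 v j.
Let face_prev v j : (j < deg v)%N ->
  face (nbr v j) (cprev (nbr v j) (index v (nbseq (nbr v j)))) = face v j :=
  iso.2.2.2.2.1 v j.
Let nbr_pos_neq v j : (j < deg v)%N -> pos (nbr v j) != pos v := iso.2.2.2.2.2.1 v j.
Let turning v : exists t : nat -> R,
    (forall m, (m < (deg v).*2)%N -> 0 <= t m <= pi / 2) /\
    \sum_(m < (deg v).*2) t m = 2 * pi /\
    (forall m, (m < (deg v).*2)%N ->
       cdir (rdir v (m.+1 %% (deg v).*2)) = cdir (rdir v m) * expi (t m)) :=
  iso.2.2.2.2.2.2.1 v.
Let face_radius v j : (j < deg v)%N -> cnorm (dpos (face v j) - pos v) = 1 :=
  iso.2.2.2.2.2.2.2 v j.

(* [cprev deg v j] is the value of [ord_pred] at [j : 'I_(deg v)]. *)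
Lemma cprev_lt v j : (j < deg v)%N -> (cprev v j < deg v)%N.
Proof. by move=> lt_j; exact: (ltn_ord (ord_pred (Ordinal lt_j))). Qed.

Lemma cnext_cprev v j : (j < deg v)%N -> cnext deg v (cprev v j) = j.
Proof. by move=> lt_j; exact: (congr1 val (ord_predK (Ordinal lt_j))). Qed.

Lemma rdir_edge v j : rdir v j.*2 = pos (nbr v j) - pos v.
Proof. by rewrite /rdir odd_double doubleK. Qed.

Lemma rdir_face v j : rdir v j.*2.+1 = dpos (face v j) - pos v.
Proof. by rewrite /rdir /= odd_double /= uphalf_double. Qed.

Lemma rdir_neq0 v m : (m < (deg v).*2)%N -> rdir v m != 0.
Proof.
rewrite -ltn_half_double /rdir => lt_m.
case: ifP => _; last by rewrite subr_eq0 nbr_pos_neq.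
apply/eqP => h; move: (face_radius lt_m).
by rewrite h cnorm0 => /eqP; rewrite eq_sym oner_eq0.
Qed.

Lemma cross_rdir_ge0 v m : (m < (deg v).*2)%N ->
  0 <= cross (rdir v m) (rdir v (m.+1 %% (deg v).*2)).
Proof.
move=> lt_m; have [t [t_bound [_ rot]]] := turning v.
have /andP[t0 tpi2] := t_bound m lt_m.
apply: cross_ge0_rot (rdir_neq0 lt_m) _ _ (rot m lt_m).
  by rewrite rdir_neq0 // ltn_pmod // (leq_ltn_trans _ lt_m).
by rewrite t0 (le_trans tpi2) // ler_pdivrMr // ler_peMr ?pi_ge0 // ler1n.
Qed.

Lemma area4_ge0 v j : (j < deg v)%N ->
  0 <= area4 (pos v) (dpos (face v (cprev v j))) (pos (nbr v j)) (dpos (face v j)).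
Proof.
move=> lt_j; have lt_k := cprev_lt lt_j.
have wrap : ((cprev v j).*2.+2 %% (deg v).*2 = j.*2)%N.
  by rewrite -doubleS -!mul2n -muln_modr /= -/(cnext deg v _) cnext_cprev.
rewrite /area4 addr_ge0 //.
- have := cross_rdir_ge0 (v := v) (m := (cprev v j).*2.+1).
  by rewrite wrap rdir_face rdir_edge; apply; rewrite -doubleS leq_double.
- have := cross_rdir_ge0 (v := v) (m := j.*2); rewrite modn_small ?rdir_edge ?rdir_face.
    by apply; rewrite ltn_double.
  by rewrite -doubleS leq_double.
Qed.

Lemma dbar_edgeE v j : (j < deg v)%N ->
  dbar_edge v j = 'i%C * (dpos (face v (cprev v j)) - dpos (face v j)).
Proof. by move=> lt_j; rewrite /dbar_edge area4_ge0. Qed.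

Lemma nbr_in_nbseq v j : (j < deg v)%N -> nbr v j \in nbseq v.
Proof. by move=> lt_j; apply: map_f; rewrite mem_iota. Qed.

Lemma index_nbr v j : (j < deg v)%N -> index (nbr v j) (nbseq v) = j.
Proof.
move=> lt_j; have -> : nbr v j = nth v (nbseq v) j.
  by rewrite (nth_map 0%N) ?size_iota ?nth_iota.
by rewrite index_uniq ?size_map ?size_iota.
Qed.

Lemma dbar_nbr v j : (j < deg v)%N -> dbar v (nbr v j) = dbar_edge v j.
Proof. by move=> lt_j; rewrite /dbar index_nbr ?lt_j. Qed.

Lemma index_nbr_lt v j : (j < deg v)%N ->
  (index v (nbseq (nbr v j)) < deg (nbr v j))%N.
Proof.
move=> lt_j; rewrite -[X in (_ < X)%N](size_iota 0) -(size_map (nbr (nbr v j))).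
by rewrite index_mem -nbseq_sym nbr_in_nbseq.
Qed.

Lemma face_index_nbr v j : (j < deg v)%N ->
  face (nbr v j) (index v (nbseq (nbr v j))) = face v (cprev v j).
Proof. by move=> lt_j; have := face_next (cprev_lt lt_j); rewrite cnext_cprev. Qed.

Section DiscreteAnalytic.
Variables (black : V -> bool) (fV : V -> R[i] -> R[i]) (fD : D -> R[i] -> R[i]).
Hypothesis bip : bipartite_colouring deg nbr black.
Hypothesis sda : special_discrete_analytic pos dpos deg face black fV fD.

Lemma nbr_black w j : ~~ black w -> (j < deg w)%N -> black (nbr w j).
Proof. by move=> /negbTE white_w /bip; rewrite white_w; case: black. Qed.

Lemma big_nbseq_black (G : V -> R[i]) w : ~~ black w ->
  \sum_(b <- nbseq w | black b) dbar w b * G b =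
  \sum_(j < deg w) dbar_edge w j * G (nbr w j).
Proof.
move=> white_w; rewrite /Defs.nbseq big_map.
have -> : iota 0 (deg w) = index_iota 0 (deg w) by rewrite /index_iota subn0.
rewrite big_mkord.
by apply: eq_big => [j|j _]; rewrite ?nbr_black ?dbar_nbr.
Qed.

Lemma dbar_edge_mul_fV w j z : ~~ black w -> (j < deg w)%N ->
  dbar_edge w j * fV (nbr w j) z =
  'i%C * (fD (face w (cprev w j)) z - fD (face w j) z).
Proof.
move=> white_w lt_j; have lt_k := index_nbr_lt lt_j.
have black_b := nbr_black white_w lt_j.
have := sda lt_k; rewrite /= black_b face_index_nbr // => ->.
have := sda (cprev_lt lt_k); rewrite /= black_b face_prev // => ->.
by rewrite dbar_edgeE //; ring.
Qed.

Lemma sum_dbar_edge_fV_eq0 w z : ~~ black w ->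
  \sum_(j < deg w) dbar_edge w j * fV (nbr w j) z = 0.
Proof.
move=> white_w; under eq_bigr => j _ do rewrite dbar_edge_mul_fV ?ltn_ord //.
rewrite -mulr_sumr sumrB [X in _ - X](reindex_inj (@ord_pred_inj _)).
by rewrite subrr mulr0.
Qed.

End DiscreteAnalytic.

End IsoradialEmbedding.

Theorem theorem9p1 (R : realType) (V D : eqType)
  (pos : V -> R[i]) (dpos : D -> R[i])
  (deg : V -> nat) (nbr : V -> nat -> V) (face : V -> nat -> D)
  (black : V -> bool)
  (Hiso : isoradial_embedding pos dpos deg nbr face)
  (Hbip : bipartite_colouring deg nbr black)
  (fV : V -> R[i] -> R[i]) (fD : D -> R[i] -> R[i])
  (Hf : special_discrete_analytic pos dpos deg face black fV fD)
  (mu : {measure set (R * R)%type -> \bar R})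
  (Hint : forall b : V, black b -> cintegrable mu (fV b)) :
  let F := fun b : V => cintegral mu (fV b) in
  forall w : V, ~~ black w ->
    \sum_(b <- nbseq deg nbr w | black b) dbar pos dpos deg nbr face w b * F b = 0.
Proof.
move=> F w white_w; rewrite (big_nbseq_black Hiso Hbip) //.
have int_nbr (j : 'I_(deg w)) : cintegrable mu (fV (nbr w j)).
  by apply/Hint/(nbr_black Hbip).
transitivity (cintegral mu (fun z =>
  \sum_(j < deg w) dbar_edge pos dpos deg nbr face w j * fV (nbr w j) z)).
  rewrite cintegral_sum => [|j _]; last exact/cintegrableZ/int_nbr.
  by apply: eq_bigr => j _; rewrite cintegralZ.
under eq_fun do rewrite (sum_dbar_edge_fV_eq0 Hiso Hbip Hf) //.
exact: cintegral0.
Qed.
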